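(* Let $n\ge 1$, $d_1,\dots,d_n\ge 1$, $L_i\in\mathbb{C}^{d_i\times d_i}$ ($i=1,\dots,n$) and $C_{i,i-1}\in\mathbb{C}^{d_i\times d_{i-1}}$ ($i=2,\dots,n$). Assume: (i) each $L_i$ is invertible and diagonalizable, $L_iV_i=V_i\Lambda_i$ with $V_i$ invertible and $\Lambda_i=\mathrm{diag}(\lambda_{i,1},\dots,\lambda_{i,d_i})$; (ii) $\sigma(L_i)\cap\sigma(L_j)=\emptyset$ for all $i\neq j$; (iii) $\|L_1\|<\|L_2\|<\cdots<\|L_n\|\le 1$. Let $\mathsf{NonLin}(x_1,\dots,x_n)=(L_1x_1+N_1(x_1),\;L_2x_2+C_{2,1}x_1+N_2(x_1,x_2),\;\dots,\;L_nx_n+C_{n,n-1}x_{n-1}+N_n(x_{n-1},x_n))$ for some maps $N_1:\mathbb{C}^{d_1}\to\mathbb{C}^{d_1}$, $N_i:\mathbb{C}^{d_{i-1}}\times\mathbb{C}^{d_i}\to\mathbb{C}^{d_i}$, and let $\tau$ be a homeomorphism of $\mathbb{C}^{d_1}\times\cdots\times\mathbb{C}^{d_n}$ with $\mathsf{Lin}=\tau^{-1}\circ\mathsf{NonLin}\circ\tau$. Then for every $i\in\{1,\dots,n\}$, $s_i\in\{1,\dots,d_i\}$ and $y\in\mathbb{C}^{d_1}\times\cdots\times\mathbb{C}^{d_n}$, $$\lim_{t\to\infty}\frac{\Big|(\Psi_{i,s_i}\circ\tau^{-1})\big(\mathsf{NonLin}^{\circ t}(y)\big)-(\Psi_{i,s_i}\circ\tau^{-1})\Big((\tau\circ\mathsf{Nom}\circ\tau^{-1})^{\circ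 t}\big((\tau\circ\mathsf{pert}\circ\tau^{-1})(y)\big)\Big)\Big|}{\|L_i\|^t}=0,$$ i.e. $|\mathcal U_{\mathsf{NonLin}}^{\circ t}(\Psi_{i,s_i}\circ\tau^{-1})(y)-\mathcal U_{\tau\circ\mathsf{Nom}\circ\tau^{-1}}^{\circ t}(\Psi_{i,s_i}\circ\tau^{-1})((\tau\circ\mathsf{pert}\circ\tau^{-1})(y))|/\|L_i\|^t\to 0$, where $\mathcal U_F f=f\circ F$.
   Context: Each $\mathbb{C}^{d_i}$ carries a fixed norm, matrices carry the induced operator norm. $\mathsf{Lin}(x_1,\dots,x_n)=(L_1x_1,\;L_2x_2+C_{2,1}x_1,\;\dots,\;L_nx_n+C_{n,n-1}x_{n-1})$, $\mathsf{Nom}(x_1,\dots,x_n)=(L_1x_1,\dots,L_nx_n)$, $\mathsf{F}^{\circ t}$ is the $t$-fold iterate. $\psi_{i,s}(x_i)=\hat e_s^{*}V_i^{-1}x_i$ ($\hat e_s$ the $s$-th standard basis vector of $\mathbb{C}^{d_i}$) and $\Psi_{i,s}(x_1,\dots,x_n)=\psi_{i,s}(x_i)$. Matrices $D_{i,j}$ ($1\le j\le i\le n$) are defined recursively in $i$: $D_{i,i}=I_{d_i}$; for $i\ge 2$, $1\le j\le i-1$, $[\tilde C_{i,j}]_{\ell,m}=[V_i^{-1}C_{i,i-1}D_{i-1,j}V_j]_{\ell,m}(1-\lambda_{j,m}/\lambda_{i,\ell})^{-1}$ and $D_{i,j}=L_i^{-1}V_i\tilde C_{i,j}V_j^{-1}$.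 Define $\mathsf{pert}_1(x_1)=x_1$, $\mathsf{pert}_i(x_1,\dots,x_i)=x_i+\sum_{j=1}^{i-1}(-1)^{i-1-j}D_{i,j}\mathsf{pert}_j(x_1,\dots,x_j)$ for $i\ge2$, and $\mathsf{pert}(x)=(\mathsf{pert}_1(x_1),\dots,\mathsf{pert}_n(x_1,\dots,x_n))$. *)

From mathcomp Require Import all_boot all_algebra.
From mathcomp Require Import all_classical all_reals all_analysis.
From mathcomp Require Import complex.
Import GRing.Theory Num.Theory numFieldNormedType.Exports.
Set Implicit Arguments. Unset Strict Implicit. Unset Printing Implicit Defensive.
Local Open Scope ring_scope.
Local Open Scope classical_set_scope.

Section Defs.
Variable R : realType.
Local Notation C := R[i].

Definition cabs (z : C) : R := ComplexField.Normc.normc z.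

Definition is_norm (d : nat) (nrm : 'cV[C]_d -> R) : Prop :=
  [/\ forall x, 0 <= nrm x,
      forall x, nrm x = 0 -> x = 0,
      forall (a : C) x, nrm (a *: x) = cabs a * nrm x &
      forall x y, nrm (x + y) <= nrm x + nrm y].

Definition opnorm (d : nat) (nrm : 'cV[C]_d -> R) (A : 'M[C]_d) : R :=
  sup [set r | exists x : 'cV[C]_d, x != 0 /\ r = nrm (A *m x) / nrm x].

Variable n : nat.
Variable d : 'I_n -> nat.

(* index i-1 (0-based: predecessor, with predix 0 = 0, never used at 0) *)
Definition predix (i : 'I_n) : 'I_n :=
  Ordinal (leq_ltn_trans (leq_pred i) (ltn_ord i)).

(* state space C^{d_1} x ... x C^{d_n} (blocks indexed 0..n-1) *)
Definition state := forall i : 'I_n, 'cV[C]_(d i).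

Definition state_norm (nrm : forall i : 'I_n, 'cV[C]_(d i) -> R) (x : state) : R :=
  \big[Num.max/0]_(i < n) nrm i (x i).

Definition state_sub (x y : state) : state := fun i => x i - y i.

Definition state_continuous (nrm : forall i : 'I_n, 'cV[C]_(d i) -> R)
  (f : state -> state) : Prop :=
  forall (x : state) (eps : R), 0 < eps -> exists2 delta : R, 0 < delta &
    forall z : state, state_norm nrm (state_sub z x) < delta ->
      state_norm nrm (state_sub (f z) (f x)) < eps.

Definition is_homeomorphism (nrm : forall i : 'I_n, 'cV[C]_(d i) -> R)
  (tau tauinv : state -> state) : Prop :=
  [/\ cancel tau tauinv, cancel tauinv tau,
      state_continuous nrm tau & state_continuous nrm tauinv].

Variable L : forall i : 'I_n, 'M[C]_(d i).
Variable Cm : forall i : 'I_n, 'M[C]_(d i, d (predix i)).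
Variable V : forall i : 'I_n, 'M[C]_(d i).
Variable lam : forall i : 'I_n, 'I_(d i) -> C.

Definition Lin (x : state) : state := fun i =>
  L i *m x i + (if (i : nat) == 0%N then 0 else Cm i *m x (predix i)).

Definition Nom (x : state) : state := fun i => L i *m x i.

(* N i (x_{i-1}) (x_i); for the first block (i = 0) the first argument is
   x (predix 0) = x 0, so N 0 is a function of x_1 alone, as in the paper *)
Definition NonLin (N : forall i : 'I_n, 'cV[C]_(d (predix i)) -> 'cV[C]_(d i) -> 'cV[C]_(d i))
  (x : state) : state := fun i =>
  L i *m x i + (if (i : nat) == 0%N then 0 else Cm i *m x (predix i))
    + N i (x (predix i)) (x i).

Definition Psi (i : 'I_n) (s : 'I_(d i)) (x : state) : C :=
  (invmx (V i) *m x i) s 0.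

Definition idlike (i j : 'I_n) : 'M[C]_(d i, d j) :=
  \matrix_(a, b) ((a : nat) == b)%:R.

Fixpoint Dfuel (k : nat) (i j : 'I_n) {struct k} : 'M[C]_(d i, d j) :=
  match k with
  | 0%N => idlike i j
  | k'.+1 =>
      if (j < i)%N then
        let M := invmx (V i) *m Cm i *m Dfuel k' (predix i) j *m V j in
        let Ct := \matrix_(l, m) (M l m * (1 - @lam j m / @lam i l)^-1) in
        invmx (L i) *m V i *m Ct *m invmx (V j)
      else idlike i j
  end.

Definition D (i j : 'I_n) : 'M[C]_(d i, d j) := Dfuel i i j.

Fixpoint pertfuel (k : nat) (x : state) (i : 'I_n) {struct k} : 'cV[C]_(d i) :=
  match k with
  | 0%N => x i
  | k'.+1 => x i + \sum_(j < n | (j < i)%N)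
                     (-1) ^+ (i.-1 - j) *: (D i j *m pertfuel k' x j)
  end.

Definition pert (x : state) : state := fun i => pertfuel i x i.

End Defs.

From mathcomp Require Import all_boot all_algebra.
From mathcomp Require Import all_classical all_reals all_analysis.
From mathcomp Require Import complex.
From mathcomp.algebra_tactics Require Import ring.
From mathcomp Require Import zify.
Import order.Order.TTheory GRing.Theory Num.Theory numFieldNormedType.Exports.
Set Implicit Arguments.
Unset Strict Implicit.
Unset Printing Implicit Defensive.
Local Open Scope ring_scope.
Local Open Scope classical_set_scope.

(* [tau] conjugates [NonLin] to [Lin], so in the coordinates [tauinv] the two
   orbits become the [Lin]-orbit of [x = tauinv y] and the [Nom]-orbit of
   [pert x].  The matrices [D i j] solve the Sylvester equations
   [L_i D_ij - D_ij L_j = C_i D_(i-1)j], which makes [pert] intertwine [Lin]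
   with [Nom].  Inverting the triangular system that defines [pert], block [i]
   of [Lin^t x] differs from block [i] of [Nom^t (pert x)] by a combination of
   the blocks [j < i] of [Nom^t (pert x)], whose [Psi]-coordinates are
   [lam_jm^t Psi_jm (pert x)].  Finally [|lam_jm| <= ||L_j|| < ||L_i||]; the
   first inequality needs the operator norm to be a genuine supremum, i.e. the
   equivalence of all norms on [C^d], which follows from the compactness of
   the unit sphere. *)

Section ComplexModulus.
Variable R : realType.
Local Notation C := R[i].

Lemma cabs_ge0 (z : C) : 0 <= cabs z.
Proof. exact: (@normr_ge0 _ (Rcomplex R)). Qed.

Lemma cabs0 : cabs (0 : C) = 0.
Proof. exact: (@normr0 _ (Rcomplex R)). Qed.

Lemma cabs1 : cabs (1 : C) = 1.
Proof. exact: ComplexField.Normc.normc1. Qed.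

Lemma cabsM (x y : C) : cabs (x * y) = cabs x * cabs y.
Proof. exact: ComplexField.Normc.normcM. Qed.

Lemma cabsN (x : C) : cabs (- x) = cabs x.
Proof. exact: (@normrN _ (Rcomplex R)). Qed.

Lemma cabsX (x : C) k : cabs (x ^+ k) = cabs x ^+ k.
Proof. by elim: k => [|k IHk]; rewrite ?cabs1 // !exprS cabsM IHk. Qed.

Lemma cabs_sum (I : finType) (P : pred I) (F : I -> C) :
  cabs (\sum_(k | P k) F k) <= \sum_(k | P k) cabs (F k).
Proof. exact: (@ler_norm_sum _ (Rcomplex R)). Qed.

Lemma cabs_real (r : R) : cabs (r%:C)%C = `|r|.
Proof. by rewrite /cabs /= expr0n addr0 sqrtr_sqr. Qed.

Lemma cabs_le_Re_Im (a b : R) : cabs (a +i* b)%C <= `|a| + `|b|.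
Proof.
rewrite -[X in _ <= X]ger0_norm ?addr_ge0 // -sqrtr_sqr ler_wsqrtr //.
rewrite sqrrD -(real_normK (num_real a)) -(real_normK (num_real b)).
by rewrite -addrA lerD2l lerDr mulrn_wge0 // mulr_ge0.
Qed.

End ComplexModulus.

Section NormOnColumns.
Variables (R : realType) (d : nat) (nrm : 'cV[R[i]]_d -> R).
Hypothesis nrmP : is_norm nrm.

Lemma nrm_ge0 x : 0 <= nrm x. Proof. by case: nrmP. Qed.
Lemma nrm_eq0 x : nrm x = 0 -> x = 0. Proof. by case: nrmP => _ + _ _; apply. Qed.
Lemma nrmZ a x : nrm (a *: x) = cabs a * nrm x. Proof. by case: nrmP => _ _ + _; apply. Qed.
Lemma nrmD x y : nrm (x + y) <= nrm x + nrm y. Proof. by case: nrmP => _ _ _; apply. Qed.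

Lemma nrm0 : nrm 0 = 0.
Proof. by rewrite -(scale0r 0) nrmZ cabs0 mul0r. Qed.

Lemma nrmN x : nrm (- x) = nrm x.
Proof. by rewrite -scaleN1r nrmZ cabsN cabs1 mul1r. Qed.

Lemma nrm_gt0 x : x != 0 -> 0 < nrm x.
Proof. by move=> x0; rewrite lt_def nrm_ge0 andbT; apply: contra x0 => /eqP/nrm_eq0->. Qed.

Lemma nrm_dist x y : `|nrm x - nrm y| <= nrm (x - y).
Proof.
have nrm_subr u v : nrm u - nrm v <= nrm (u - v).
  by rewrite lerBlDr (le_trans _ (nrmD _ _)) // subrK.
by rewrite ler_norml nrm_subr andbT lerNl opprB -[x - y]opprB nrmN nrm_subr.
Qed.

Lemma nrm_sum (I : finType) (P : pred I) (F : I -> 'cV_d) :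
  nrm (\sum_(k | P k) F k) <= \sum_(k | P k) nrm (F k).
Proof.
elim/big_ind2: _ => [|u a v b ua vb|//]; first by rewrite nrm0.
exact: le_trans (nrmD _ _) (lerD ua vb).
Qed.

Lemma nrm_le_coord x : nrm x <= \sum_(k < d) cabs (x k 0) * nrm (delta_mx k 0).
Proof.
rewrite {1}(matrix_sum_delta x) (le_trans (nrm_sum _ _)) //.
by apply: ler_sum => k _; rewrite big_ord1 nrmZ.
Qed.

Definition complexify (u : 'rV[R]_(d + d)) : 'cV[R[i]]_d :=
  \col_k ((lsubmx u) 0 k +i* (rsubmx u) 0 k)%C.

Definition realify (x : 'cV[R[i]]_d) : 'rV[R]_(d + d) :=
  row_mx (\row_k complex.Re (x k 0)) (\row_k complex.Im (x k 0)).

Lemma realifyK : cancel realify complexify.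
Proof.
move=> x; apply/matrixP => k j; rewrite (ord1 j) mxE row_mxKl row_mxKr !mxE.
by case: (x k 0).
Qed.

Lemma complexifyK : cancel complexify realify.
Proof.
by move=> u; rewrite -[RHS]hsubmxK; congr row_mx; apply/matrixP => i j; rewrite !mxE (ord1 i).
Qed.

Lemma complexifyB u v : complexify (u - v) = complexify u - complexify v.
Proof. by apply/matrixP => k j; rewrite !mxE. Qed.

Lemma complexifyZ (r : R) u : complexify (r *: u) = (r%:C)%C *: complexify u.
Proof. by apply/matrixP => k j; apply/eqP; rewrite !mxE eq_complex /= !mul0r subr0 addr0 !eqxx. Qed.

Lemma complexify0 : complexify 0 = 0.
Proof. by rewrite -(subrr 0) complexifyB subrr. Qed.

Lemma cabs_complexify_le u k : cabs (complexify u k 0) <= 2 * `|u|.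
Proof.
have entry_le j : `|u 0 j| <= `|u|.
  rewrite [X in _ <= X]/Num.norm /= mx_normrE.
  exact: (le_bigmax _ (fun ij : 'I_1 * 'I_(d + d) => `|u ij.1 ij.2|) (0, j)).
by rewrite mxE (le_trans (cabs_le_Re_Im _ _)) // mulr2n mulrDl mul1r lerD // mxE.
Qed.

Lemma nrm_complexify_le u :
  nrm (complexify u) <= 2 * (\sum_(k < d) nrm (delta_mx k 0)) * `|u|.
Proof.
rewrite (le_trans (nrm_le_coord _)) // mulr_sumr mulr_suml ler_sum // => k _.
by rewrite mulrAC ler_wpM2r ?nrm_ge0 // cabs_complexify_le.
Qed.

Lemma continuous_nrm_complexify : continuous (nrm \o complexify).
Proof.
pose K := 2 * \sum_(k < d) nrm (delta_mx k 0) + 1.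
have K_gt0 : 0 < K by rewrite ltr_wpDl // mulr_ge0 // sumr_ge0 // => k _; exact: nrm_ge0.
have le_K : 2 * \sum_(k < d) nrm (delta_mx k 0) <= K by rewrite lerDl.
move=> u; apply/(cvgrPdist_lt (FF := nbhs_filter u)) => e e_gt0.
suff : \forall v \near u, `|nrm (complexify u) - nrm (complexify v)| < e by [].
apply/nbhs_normP; exists (e / K) => [|v /= uv]; first by rewrite /= divr_gt0.
rewrite (le_lt_trans (nrm_dist _ _)) // -complexifyB (le_lt_trans (nrm_complexify_le _)) //.
by rewrite (le_lt_trans (ler_wpM2r (normr_ge0 _) le_K)) // mulrC -ltr_pdivlMr.
Qed.

(* Every norm dominates the sup-norm: [nrm \o complexify] attains a positive
   minimum on the compact unit sphere of [R^(2d)]. *)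
Lemma nrm_complexify_ge : (0 < d)%N ->
  exists2 m : R, 0 < m & forall u, m * `|u| <= nrm (complexify u).
Proof.
move=> d_gt0; pose S := [set u : 'rV[R]_(d + d) | `|u| = 1].
have S_normalize u : u != 0 -> S (`|u|^-1 *: u).
  by move=> u0; rewrite /S /= normrZ ger0_norm ?invr_ge0 // mulVf ?normr_eq0.
have S_neq0 : S !=set0.
  exists (`|const_mx 1 : 'rV[R]_(d + d)|^-1 *: const_mx 1); apply: S_normalize.
  apply/eqP => /matrixP/(_ 0 (lshift d (Ordinal d_gt0))); rewrite !mxE => /eqP.
  by rewrite oner_eq0.
have S_compact : compact S.
  apply: bounded_closed_compact.
    by exists 1; split=> [|M M_gt1 u Su]; [exact: num_real | rewrite /= Su ltW].
  exact: (continuous_closedP _).1 (@norm_continuous _ _) _ (@closed_eq _ 1).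
have [c /set_mem Sc c_min] :=
  compact_EVT_min S_neq0 S_compact (continuous_subspaceT continuous_nrm_complexify).
exists (nrm (complexify c)) => [|u].
  apply: nrm_gt0; apply/eqP => c0.
  have c_eq0 : c = 0 by rewrite -(complexifyK c) c0 -complexify0 complexifyK.
  by move: Sc; rewrite /S /= c_eq0 normr0 => /esym/eqP; rewrite oner_eq0.
have [->|u0] := eqVneq u 0; first by rewrite normr0 mulr0 nrm_ge0.
have := c_min _ (mem_set (S_normalize u u0)); rewrite /= complexifyZ nrmZ cabs_real.
by rewrite ger0_norm ?invr_ge0 // => le_m; rewrite -ler_pdivlMr ?normr_gt0 // mulrC.
Qed.

Lemma coord_le_nrm :
  exists2 c : R, 0 < c & forall (x : 'cV_d) (k : 'I_d), cabs (x k 0) <= c * nrm x.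
Proof.
case: (posnP d) => [d0 | /nrm_complexify_ge[m m_gt0 m_le]].
  by exists 1 => // x k; move: (ltn_ord k); rewrite {2}d0.
exists (2 / m) => [|x k]; first by rewrite divr_gt0.
rewrite -{1}(realifyK x) (le_trans (cabs_complexify_le _ _)) //.
rewrite mulrAC ler_pdivlMr // -mulrA ler_wpM2l // mulrC.
by rewrite -{2}(realifyK x) m_le.
Qed.

Lemma nrm_mulmx_le (A : 'M[R[i]]_d) : exists K : R, forall x, nrm (A *m x) <= K * nrm x.
Proof.
have [c c_gt0 c_le] := coord_le_nrm.
exists (\sum_(k < d) (\sum_(l < d) cabs (A k l) * c) * nrm (delta_mx k 0)) => x.
rewrite (le_trans (nrm_le_coord _)) // mulr_suml ler_sum // => k _.
rewrite mulrAC ler_wpM2r ?nrm_ge0 // mxE (le_trans (cabs_sum _ _)) //.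
by rewrite mulr_suml ler_sum // => l _; rewrite cabsM -mulrA ler_wpM2l ?cabs_ge0.
Qed.

Lemma opnorm_ge_ratio (A : 'M[R[i]]_d) x : x != 0 -> nrm (A *m x) / nrm x <= opnorm nrm A.
Proof.
move=> x0; have [K K_ge] := nrm_mulmx_le A.
apply: sup_upper_bound; last by exists x.
split; first by exists (nrm (A *m x) / nrm x), x.
by exists K => _ [y [y0 ->]]; rewrite ler_pdivrMr ?nrm_gt0.
Qed.

Lemma cabs_eigen_le_opnorm (A : 'M[R[i]]_d) (x : 'cV_d) a :
  x != 0 -> A *m x = a *: x -> cabs a <= opnorm nrm A.
Proof.
move=> x0 Ax; have := opnorm_ge_ratio A x0.
by rewrite Ax nrmZ mulfK // gt_eqF ?nrm_gt0.
Qed.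

End NormOnColumns.

Lemma cvg_sum0 (R : realType) (I : Type) (r : seq I) (P : pred I) (f : I -> nat -> R) :
  (forall k, P k -> f k @ \oo --> 0) ->
  (fun t => \sum_(k <- r | P k) f k t) @ \oo --> 0.
Proof.
move=> f_cvg0; elim: r => [|k r IHr].
  by under eq_fun do rewrite big_nil; exact: cvg_cst.
under eq_fun do rewrite big_cons.
case: (boolP (P k)) => // Pk.
by have := cvgD (f_cvg0 k Pk) IHr; rewrite addr0; apply.
Qed.

Lemma iter_morph (T U : Type) (h : T -> U) (f : T -> T) (g : U -> U) :
  {morph h : x / f x >-> g x} -> forall t, {morph h : x / iter t f x >-> iter t g x}.
Proof. by move=> hf t x; elim: t => //= t <-. Qed.

Section Diagonalizable.
Variables (K : fieldType) (p : nat) (A U : 'M[K]_p) (a : 'I_p -> K).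
Hypotheses (U_unit : U \in unitmx) (AU : A *m U = U *m diag_mx (\row_l a l)).

Lemma invmx_mul_diag : invmx U *m A = diag_mx (\row_l a l) *m invmx U.
Proof.
by rewrite -[LHS]mulmx1 -(mulmxV U_unit) mulmxA -(mulmxA _ A) AU !mulmxA mulVmx ?mul1mx.
Qed.

Lemma eigenvalue_diag l : eigenvalue A (a l).
Proof.
apply/eigenvalueP; exists (row l (invmx U)).
  by rewrite -row_mul invmx_mul_diag mul_diag_mx; apply/rowP => m; rewrite !mxE.
apply: contraTneq isT => row0.
have := congr1 (fun v => v *m U) row0; rewrite -row_mul mulVmx // mul0mx.
by move/rowP/(_ l); rewrite !mxE eqxx => /eqP; rewrite oner_eq0.
Qed.

Lemma eigenvector_col m : A *m col m U = a m *: col m U.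
Proof.
apply/colP => k; have : (A *m U) k m = (U *m diag_mx (\row_l a l)) k m by rewrite AU.
rewrite mul_mx_diag !mxE => AUkm; rewrite mulrC -AUkm.
by apply: eq_bigr => j _; rewrite !mxE.
Qed.

Lemma col_neq0 m : col m U != 0.
Proof.
apply: contraTneq isT => col0.
have := congr1 (mulmx (invmx U)) col0; rewrite colE mulKmx // mulmx0.
by move/colP/(_ m); rewrite !mxE !eqxx /= => /eqP; rewrite oner_eq0.
Qed.

Lemma eigval_neq0 : A \in unitmx -> forall l, a l != 0.
Proof.
move=> A_unit l.
have : diag_mx (\row_l a l) \in unitmx.
  rewrite -[diag_mx _]mul1mx -(mulVmx U_unit) -mulmxA -AU mulmxA.
  by rewrite !unitmx_mul unitmx_inv U_unit A_unit.
rewrite unitmxE det_diag unitfE => /prodf_neq0/(_ l isT).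
by rewrite mxE.
Qed.

End Diagonalizable.

Section Sylvester.
Variables (K : fieldType) (p q : nat) (A U : 'M[K]_p) (B W : 'M[K]_q).
Variables (a : 'I_p -> K) (b : 'I_q -> K).
Hypotheses (A_unit : A \in unitmx) (U_unit : U \in unitmx) (W_unit : W \in unitmx).
Hypotheses (AU : A *m U = U *m diag_mx (\row_l a l)) (BW : B *m W = W *m diag_mx (\row_m b m)).
Hypothesis a_neq_b : forall l m, a l != b m.

(* For [Y := U^-1 X W] the equation [A X - X B = M] reads
   [(a l - b m) Y l m = (U^-1 M W) l m]; the factor [a l] of [a l - b m] is
   supplied by [invmx A]. *)
Definition sylvester_sol (M : 'M[K]_(p, q)) : 'M[K]_(p, q) :=
  invmx A *m U *m
    (\matrix_(l, m) ((invmx U *m M *m W) l m * (1 - b m / a l)^-1)) *m invmx W.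

Lemma sylvester_solP M : A *m sylvester_sol M - sylvester_sol M *m B = M.
Proof.
rewrite /sylvester_sol; set M' := invmx U *m M *m W.
set X := _ *m invmx W; set Y := invmx U *m X *m W.
have diagY : diag_mx (\row_l a l) *m Y = \matrix_(l, m) (M' l m * (1 - b m / a l)^-1).
  rewrite /Y /X !mulmxA -(invmx_mul_diag U_unit AU).
  by rewrite mulmxK // mulVmx // mul1mx mulmxKV.
apply: (can_inj (mulKVmx U_unit)); apply: (can_inj (mulmxK W_unit)); rewrite -/M'.
have -> : invmx U *m (A *m X - X *m B) *m W =
    diag_mx (\row_l a l) *m Y - Y *m diag_mx (\row_m b m).
  by rewrite mulmxBr mulmxBl /Y !mulmxA (invmx_mul_diag U_unit AU) -!mulmxA BW.
clearbody Y M'; apply/matrixP => l m; move/matrixP/(_ l m): diagY.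
rewrite mul_diag_mx mul_mx_diag !mxE => aY.
have a_neq0 := eigval_neq0 U_unit AU A_unit l.
have ab_neq0 : a l - b m != 0 by rewrite subr_eq0.
have -> : Y l m = a l * Y l m / a l by field.
by rewrite aY; field; rewrite a_neq0 ab_neq0.
Qed.

End Sylvester.

Section Blocks.
Variables (R : realType) (n : nat) (d : 'I_n -> nat).
Local Notation C := R[i].
Variables (L : forall i, 'M[C]_(d i)) (Cm : forall i, 'M[C]_(d i, d (predix i))).
Variables (V : forall i, 'M[C]_(d i)) (lam : forall i, 'I_(d i) -> C).
Arguments lam : clear implicits.
Hypotheses (L_unit : forall i, L i \in unitmx) (V_unit : forall i, V i \in unitmx).
Hypothesis LV : forall i, L i *m V i = V i *m diag_mx (\row_s lam i s).
Hypothesis spectra_disjoint : forall (i j : 'I_n) (a : C),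
  i != j -> ~ (eigenvalue (L i) a /\ eigenvalue (L j) a).

Local Notation D := (D L Cm V lam).
Local Notation pertfuel := (pertfuel L Cm V lam).
Local Notation pert := (pert L Cm V lam).

Lemma D_diag i : D i i = 1%:M.
Proof.
by rewrite /D; case: i => [[|i] ?] /=; rewrite ?ltnn; apply/matrixP => a b; rewrite !mxE.
Qed.

Lemma D_sylvester_sol (i j : 'I_n) : (j < i)%N ->
  D i j = sylvester_sol (L i) (V i) (V j) (lam i) (lam j) (Cm i *m D (predix i) j).
Proof. by rewrite /D /sylvester_sol; case: i => [[|i] ?] //= ->; rewrite !mulmxA. Qed.

Lemma D_sylvester (i j : 'I_n) : (j < i)%N ->
  L i *m D i j - D i j *m L j = Cm i *m D (predix i) j.
Proof.
move=> lt_ji; rewrite D_sylvester_sol //.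
apply: sylvester_solP (L_unit i) (V_unit i) (V_unit j) (LV i) (LV j) _ _ => l m.
apply/eqP => lam_eq; apply: (@spectra_disjoint i j (lam i l)).
  by apply: contraTneq lt_ji => ->; rewrite ltnn.
by split; [|rewrite lam_eq]; apply: eigenvalue_diag (V_unit _) (LV _) _.
Qed.

Lemma pertfuel_ord0 x k (i : 'I_n) : (i : nat) = 0%N -> pertfuel k x i = x i.
Proof.
case: k => [|k] // i0; rewrite [LHS]/= big_pred0 ?addr0 // => j; by rewrite i0 ltn0.
Qed.

Lemma pertfuel_eq x k k' (i : 'I_n) : (i <= k)%N -> (i <= k')%N ->
  pertfuel k x i = pertfuel k' x i.
Proof.
elim: k k' i => [|k IHk] [|k'] [[|i] lti] le_ik le_ik'; try by rewrite !pertfuel_ord0.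
rewrite [LHS]/= [RHS]/=; congr (_ + _); apply: eq_bigr => j lt_ji; congr (_ *: (_ *m _)).
by apply: IHk; rewrite -ltnS (leq_trans lt_ji).
Qed.

Lemma pertE x (i : 'I_n) :
  pert x i = x i + \sum_(j < n | (j < i)%N) (-1) ^+ (i.-1 - j) *: (D i j *m pert x j).
Proof.
case: i => [[|i] lti]; first by rewrite /pert pertfuel_ord0 // big_pred0 ?addr0.
rewrite /pert [LHS]/=; congr (_ + _); apply: eq_bigr => j lt_ji; congr (_ *: (_ *m _)).
exact: pertfuel_eq.
Qed.

Lemma sum_D_pert_pred x (i : 'I_n) : (0 < i)%N ->
  \sum_(j < n | (j < i)%N) (-1) ^+ (i.-1 - j) *: (D (predix i) j *m pert x j) = x (predix i).
Proof.
move=> i_gt0; have lt_pi : (predix i < i)%N by rewrite ltn_predL.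
rewrite (bigD1 (predix i)) //= subnn expr0 scale1r D_diag mul1mx.
rewrite (pertE x (predix i)) -addrA -[RHS]addr0; congr (_ + _).
rewrite (eq_bigl (fun j : 'I_n => (j < predix i)%N)) => [|j]; last first.
  by rewrite -val_eqE /=; apply/andP/idP => [[? /eqP ?]|?]; [|split; [|apply/eqP]]; lia.
rewrite -big_split big1 //= => j lt_j.
have -> : (i.-1 - j = (i.-1.-1 - j).+1)%N by lia.
by rewrite exprS mulN1r scaleNr subrr.
Qed.

Lemma pert_Lin x (i : 'I_n) : pert (Lin L Cm x) i = L i *m pert x i.
Proof.
have [k] := ubnP i; elim: k i => // k IHk i /ltnSE le_ik.
rewrite pertE (pertE x i).
under eq_bigr => j lt_ji do rewrite IHk ?(leq_trans lt_ji) //.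
rewrite mulmxDr /Lin -addrA; congr (_ + _).
have L_D_pert (j : 'I_n) : (j < i)%N ->
    L i *m ((-1) ^+ (i.-1 - j) *: (D i j *m pert x j)) =
    (-1) ^+ (i.-1 - j) *: (Cm i *m (D (predix i) j *m pert x j)) +
    (-1) ^+ (i.-1 - j) *: (D i j *m (L j *m pert x j)).
  by move=> lt_ji; rewrite -scalerDr -scalemxAr !mulmxA -mulmxDl -(D_sylvester lt_ji) subrK.
rewrite mulmx_sumr (eq_bigr _ L_D_pert) big_split; congr (_ + _).
under [RHS]eq_bigr do rewrite scalemxAr.
rewrite -mulmx_sumr; case: posnP => [i0 | i_gt0]; last by rewrite sum_D_pert_pred.
by rewrite big_pred0 ?mulmx0 // => j; rewrite i0 ltn0.
Qed.

Lemma pert_iter_Lin t x (i : 'I_n) :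
  pert (iter t (Lin L Cm) x) i = iter t (Nom L) (pert x) i.
Proof. by elim: t i => [|t IHt] i //; rewrite !iterS pert_Lin IHt. Qed.

Lemma iter_Lin_pertE t x (i : 'I_n) :
  iter t (Lin L Cm) x i = iter t (Nom L) (pert x) i -
    \sum_(j < n | (j < i)%N) (-1) ^+ (i.-1 - j) *: (D i j *m iter t (Nom L) (pert x) j).
Proof.
have := pertE (iter t (Lin L Cm) x) i; under eq_bigr do rewrite pert_iter_Lin.
by rewrite pert_iter_Lin => ->; rewrite addrK.
Qed.

Lemma Psi_iter_Nom t z (j : 'I_n) (m : 'I_(d j)) :
  Psi V m (iter t (Nom L) z) = lam j m ^+ t * Psi V m z.
Proof.
rewrite /Psi; elim: t => [|t IHt]; first by rewrite mul1r.
rewrite iterS /Nom mulmxA (invmx_mul_diag (V_unit j) (LV j)) -mulmxA mul_diag_mx.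
by rewrite mxE IHt mxE exprS mulrA.
Qed.

Lemma Psi_iter_Lin_subE t x (i : 'I_n) (s : 'I_(d i)) :
  Psi V s (iter t (Lin L Cm) x) - Psi V s (iter t (Nom L) (pert x)) =
  - \sum_(j < n | (j < i)%N) (-1) ^+ (i.-1 - j) *
      \sum_(m < d j) (invmx (V i) *m D i j *m V j) s m * (lam j m ^+ t * Psi V m (pert x)).
Proof.
set z := iter t (Nom L) (pert x).
have entryB (A B : 'cV[C]_(d i)) : (A - B) s 0 = A s 0 - B s 0 by rewrite !mxE.
have entryZ a (A : 'cV[C]_(d i)) : (a *: A) s 0 = a * A s 0 by rewrite !mxE.
rewrite {1 2}/Psi iter_Lin_pertE -/z mulmxBr entryB addrAC subrr add0r.
congr (- _); rewrite mulmx_sumr summxE; apply: eq_bigr => j _.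
rewrite -scalemxAr entryZ; congr (_ * _).
have -> : invmx (V i) *m (D i j *m z j) =
    invmx (V i) *m D i j *m V j *m (invmx (V j) *m z j).
  by rewrite -!mulmxA mulKVmx.
rewrite mxE; apply: eq_bigr => m _; congr (_ * _).
exact: Psi_iter_Nom.
Qed.

Lemma cabs_Psi_iter_Lin_sub_le t x (i : 'I_n) (s : 'I_(d i)) :
  cabs (Psi V s (iter t (Lin L Cm) x) - Psi V s (iter t (Nom L) (pert x))) <=
  \sum_(j < n | (j < i)%N) \sum_(m < d j)
    cabs ((invmx (V i) *m D i j *m V j) s m) * cabs (Psi V m (pert x)) * cabs (lam j m) ^+ t.
Proof.
rewrite Psi_iter_Lin_subE cabsN (le_trans (cabs_sum _ _)) // ler_sum // => j _.
rewrite cabsM cabsX cabsN cabs1 expr1n mul1r (le_trans (cabs_sum _ _)) // ler_sum // => m _.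
by rewrite !cabsM cabsX [cabs (lam j m) ^+ t * _]mulrC mulrA.
Qed.

Variable nrm : forall i, 'cV[C]_(d i) -> R.
Arguments nrm : clear implicits.
Hypothesis nrmP : forall i, is_norm (nrm i).
Hypothesis opnorm_lt :
  forall i j : 'I_n, (i < j)%N -> opnorm (nrm i) (L i) < opnorm (nrm j) (L j).

Lemma cabs_lam_le_opnorm j m : cabs (lam j m) <= opnorm (nrm j) (L j).
Proof.
exact (cabs_eigen_le_opnorm (nrmP j) (col_neq0 (V_unit j) m) (eigenvector_col (LV j) m)).
Qed.

Lemma Psi_iter_Lin_sub_cvg x (i : 'I_n) (s : 'I_(d i)) :
  (fun t => cabs (Psi V s (iter t (Lin L Cm) x) - Psi V s (iter t (Nom L) (pert x)))
     / opnorm (nrm i) (L i) ^+ t) @ \oo --> 0.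
Proof.
set rho := opnorm (nrm i) (L i).
have rho_ge0 : 0 <= rho := le_trans (cabs_ge0 _) (cabs_lam_le_opnorm s).
pose c j m := cabs ((invmx (V i) *m D i j *m V j) s m) * cabs (Psi V m (pert x)).
apply: (@squeeze_cvgr _ _ _ _ (fun=> 0) (fun t => \sum_(j < n | (j < i)%N)
  \sum_(m < d j) geometric (c j m) (cabs (lam j m) / rho) t)); last 2 first.
- exact: cvg_cst.
- apply: cvg_sum0 => j lt_ji; apply: cvg_sum0 => m _; apply: cvg_geometric.
  have lt_rho := le_lt_trans (cabs_lam_le_opnorm m) (opnorm_lt lt_ji).
  rewrite ger0_norm ?divr_ge0 ?cabs_ge0 // ltr_pdivrMr ?mul1r //.
  exact: le_lt_trans (cabs_ge0 _) lt_rho.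
apply: filterE => t; rewrite divr_ge0 ?cabs_ge0 ?exprn_ge0 //=.
rewrite (le_trans (ler_wpM2r _ (cabs_Psi_iter_Lin_sub_le _ _ _))) ?invr_ge0 ?exprn_ge0 //.
rewrite mulr_suml; apply: ler_sum => j _; rewrite mulr_suml; apply: ler_sum => m _.
by rewrite /geometric expr_div_n mulrA.
Qed.

End Blocks.

Theorem theorem4 (R : realType) (n : nat) (d : 'I_n -> nat)
  (nrm : forall i : 'I_n, 'cV[complex R]_(d i) -> R)
  (L : forall i : 'I_n, 'M[complex R]_(d i))
  (Cm : forall i : 'I_n, 'M[complex R]_(d i, d (predix i)))
  (V : forall i : 'I_n, 'M[complex R]_(d i))
  (lam : forall i : 'I_n, 'I_(d i) -> complex R)
  (N : forall i : 'I_n, 'cV[complex R]_(d (predix i)) -> 'cV[complex R]_(d i) -> 'cV[complex R]_(d i))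
  (tau tauinv : @state R n d -> @state R n d) :
  (0 < n)%N ->
  (forall i, 0 < d i)%N ->
  (forall i, is_norm (nrm i)) ->
  (* (i) *)
  (forall i, L i \in unitmx) ->
  (forall i, V i \in unitmx) ->
  (forall i, L i *m V i = V i *m diag_mx (\row_s lam i s)) ->
  (* (ii) *)
  (forall (i j : 'I_n) (a : complex R), i != j -> ~ (eigenvalue (L i) a /\ eigenvalue (L j) a)) ->
  (* (iii) *)
  (forall i j : 'I_n, (i < j)%N -> opnorm (nrm i) (L i) < opnorm (nrm j) (L j)) ->
  (forall i : 'I_n, opnorm (nrm i) (L i) <= 1) ->
  (* tau homeomorphism conjugating NonLin to Lin *)
  is_homeomorphism nrm tau tauinv ->
  (forall x, Lin L Cm x = tauinv (NonLin L Cm N (tau x))) ->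
  forall (i : 'I_n) (s : 'I_(d i)) (y : @state R n d),
    (fun t : nat =>
       cabs (Psi V s (tauinv (iter t (NonLin L Cm N) y))
             - Psi V s (tauinv (iter t (tau \o Nom L \o tauinv)
                                  ((tau \o pert L Cm V lam \o tauinv) y))))
       / opnorm (nrm i) (L i) ^+ t) @ \oo --> (0 : R).
Proof.
move=> _ _ nrmP L_unit V_unit LV spectra opnorm_lt _ [tauK tauinvK _ _] conj i s y.
have tauinv_NonLin : {morph tauinv : x / NonLin L Cm N x >-> Lin L Cm x}.
  by move=> x; rewrite conj tauinvK.
have tau_Nom : {morph tau : x / Nom L x >-> (tau \o Nom L \o tauinv) x}.
  by move=> x /=; rewrite tauK.
under eq_fun do rewrite (iter_morph tauinv_NonLin) -(iter_morph tau_Nom) tauK.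
exact (Psi_iter_Lin_sub_cvg Cm L_unit V_unit LV spectra nrmP opnorm_lt (tauinv y) s).
Qed.
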